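(* Let $A\subseteq B$ be an admissible extension (under the standing assumptions below). Then for every $\psi\in\mathrm{Spec}(A)$ there exists $\mu\in\mathrm{Min}(B)$ such that $\mu\cap\nabla_A\subseteq\psi$.
   Context: For an algebra $M$ of a fixed signature: $\mathrm{Con}(M)$ is its congruence lattice with bottom $\Delta_M$ and top $\nabla_M=M^2$. $[\cdot,\cdot]_M$ is the term condition commutator: for $\alpha,\beta,\mu\in\mathrm{Con}(M)$, $C(\alpha,\beta;\mu)$ means that for all $n,k$, every $(n+k)$-ary term $t$, all $(a_i,b_i)\in\alpha$ and $(c_j,d_j)\in\beta$: $(t(\bar a,\bar c),t(\bar a,\bar d))\in\mu$ iff $(t(\bar b,\bar c),t(\bar b,\bar d))\in\mu$; $[\alpha,\beta]_M=\bigcap\{\mu: C(\alpha,\beta;\mu)\}$. A congruence $\phi\neq\nabla_M$ is prime if $[\alpha,\beta]_M\subseteq\phi$ implies $\alpha\subseteq\phi$ or $\beta\subseteq\phi$; $\mathrm{Spec}(M)$ is the set of primes, $\mathrm{Min}(M)$ its minimal elements; $\rho_M(\theta)$ is the intersection of all primes containing $\theta$ ($\nabla_M$ if none); $M$ is semiprime if $\rho_M(\Delta_M)=\Delta_M$. Standing assumptions: $B$ is an algebra, $A$ is a subalgebra of $B$, $A$ and $B$ are semiprime, and the commutators of $A$ and $B$ are commutative and distributive w.r.t. arbitrary joins (i.e. $[\alpha,\beta]=[\beta,\alpha]$ and $[\bigvee_i\alpha_i,\beta]=\bigvee_i[\alpha_i,\beta]$). The extension $A\subseteq B$ is admissible iff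 $\phi\cap\nabla_A\in\mathrm{Spec}(A)$ for all $\phi\in\mathrm{Spec}(B)$. *)

From mathcomp Require Import all_boot.
Set Implicit Arguments. Unset Strict Implicit. Unset Printing Implicit Defensive.

Record signature := Signature { sym : Type; arity : sym -> nat }.

Record algebra (s : signature) := Algebra {
  carrier :> Type;
  ops : forall f : sym s, ('I_(arity f) -> carrier) -> carrier }.

Inductive term (s : signature) (X : Type) : Type :=
  | Var : X -> term s X
  | App : forall f : sym s, ('I_(arity f) -> term s X) -> term s X.

Fixpoint eval (s : signature) (M : algebra s) (X : Type) (env : X -> M)
  (t : term s X) : M :=
  match t with
  | Var x => env x
  | App f args => @ops s M f (fun i => eval env (args i))
  end.

Definition prel (T : Type) := T -> T -> Prop.
Definition rsub (T : Type) (r q : prel T) := forall x y, r x y -> q x y.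
Definition req (T : Type) (r q : prel T) := forall x y, r x y <-> q x y.
Definition Delta (T : Type) : prel T := fun x y => x = y.
Definition Nabla (T : Type) : prel T := fun _ _ => True.

Section Alg.
Variables (s : signature) (M : algebra s).

Definition is_cong (th : prel M) : Prop :=
  [/\ (forall x, th x x), (forall x y, th x y -> th y x),
      (forall x y z, th x y -> th y z -> th x z) &
      (forall f (a b : 'I_(arity f) -> M), (forall i, th (a i) (b i)) ->
         th (@ops s M f a) (@ops s M f b))].

Definition cjoin (I : Type) (fam : I -> prel M) : prel M :=
  fun x y => forall th, is_cong th -> (forall i, rsub (fam i) th) -> th x y.

(* Term condition C(alpha, beta; mu): (n+k)-ary terms are terms over the
   variable type 'I_n + 'I_k. *)
Definition env2 (n k : nat) (a : 'I_n -> M) (c : 'I_k -> M) : 'I_n + 'I_k -> M :=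
  fun v => match v with inl i => a i | inr j => c j end.

Definition TC (al be mu : prel M) : Prop :=
  forall (n k : nat) (t : term s ('I_n + 'I_k)) (a b : 'I_n -> M)
         (c d : 'I_k -> M),
    (forall i, al (a i) (b i)) -> (forall j, be (c j) (d j)) ->
    (mu (eval (env2 a c) t) (eval (env2 a d) t) <->
     mu (eval (env2 b c) t) (eval (env2 b d) t)).

Definition commutator (al be : prel M) : prel M :=
  fun x y => forall mu, is_cong mu -> TC al be mu -> mu x y.

Definition is_prime (ph : prel M) : Prop :=
  [/\ is_cong ph, ~ req ph (@Nabla M) &
     forall al be, is_cong al -> is_cong be ->
       rsub (commutator al be) ph -> rsub al ph \/ rsub be ph].

Definition is_min_prime (mu : prel M) : Prop :=
  is_prime mu /\ forall ph, is_prime ph -> rsub ph mu -> rsub mu ph.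

Definition rho (th : prel M) : prel M :=
  fun x y => forall ph, is_prime ph -> rsub th ph -> ph x y.

Definition semiprime : Prop := req (rho (@Delta M)) (@Delta M).

Definition comm_commutative : Prop :=
  forall al be, is_cong al -> is_cong be ->
    req (commutator al be) (commutator be al).

Definition comm_join_distributive : Prop :=
  forall (I : Type) (fam : I -> prel M) (be : prel M),
    (forall i, is_cong (fam i)) -> is_cong be ->
    req (commutator (cjoin fam) be) (cjoin (fun i => commutator (fam i) be)).

End Alg.

Definition is_subuniverse (s : signature) (B : algebra s) (S : B -> Prop) : Prop :=
  forall f (a : 'I_(arity f) -> B), (forall i, S (a i)) -> S (@ops s B f a).

Definition subalg (s : signature) (B : algebra s) (S : B -> Prop)
  (HS : is_subuniverse S) : algebra s :=
  @Algebra s {x : B | S x}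
    (fun f a => exist _ (@ops s B f (fun i => proj1_sig (a i)))
                        (HS f _ (fun i => proj2_sig (a i)))).
Arguments subalg {s B S} HS.

(* phi ∩ Nabla_A, as a relation on A *)
Definition restr (s : signature) (B : algebra s) (S : B -> Prop) (HS : is_subuniverse S)
  (ph : prel B) : prel (subalg HS) :=
  fun x y => ph (proj1_sig x) (proj1_sig y).
Arguments restr {s B S} HS ph _ _.

Definition admissible (s : signature) (B : algebra s) (S : B -> Prop)
  (HS : is_subuniverse S) : Prop :=
  forall ph, is_prime ph -> is_prime (restr HS ph).

From mathcomp Require Import all_boot.
From mathcomp Require Import boolp.
From mathcomp Require classical_sets.
Set Implicit Arguments. Unset Strict Implicit. Unset Printing Implicit Defensive.

(* Let psi be a prime congruence of the subalgebra A of B.  The proof has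
   two Zorn's-lemma steps.
   1. Among the congruences theta of B with (theta ∩ ∇_A) ⊆ psi (the
      diagonal is one) there is a maximal one, since unions of chains of
      congruences are congruences.  Such a maximal theta is prime: if
      [alpha, beta]_B ⊆ theta then, by commutativity and join-distributivity
      of the commutator of B, [theta ∨ alpha, theta ∨ beta]_B ⊆ theta; the
      commutator of the restrictions to A lies below the restriction of the
      commutator, so primality of psi puts one of (theta ∨ alpha) ∩ ∇_A,
      (theta ∨ beta) ∩ ∇_A below psi, and maximality of theta concludes.
   2. In any algebra every prime contains a minimal prime, because the
      intersection of a chain of primes is prime.
   A minimal prime mu below theta then satisfies mu ∩ ∇_A ⊆ psi. *)

Lemma zorn_on (T : Type) (R : T -> T -> Prop) (P : T -> Prop) (t0 : T) :
  (forall t, R t t) -> (forall r s t, R r s -> R s t -> R r t) -> P t0 ->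
  (forall C : T -> Prop, (forall t, C t -> P t) ->
     (forall s t, C s -> C t -> R s t \/ R t s) -> forall c, C c ->
     exists2 u, P u & forall t, C t -> R t u) ->
  exists2 m, P m & forall t, P t -> R m t -> R t m.
Proof.
move=> Rrefl Rtrans Pt0 chain_ub.
pose U := {t | P t}.
pose Rb := fun x y : U => `[< R (sval x) (sval y) >].
have Rb_refl : forall x, Rb x x by move=> x; apply/asboolP.
have Rb_trans : forall x y z, Rb x y -> Rb y z -> Rb x z.
  by move=> x y z /asboolP Rxy /asboolP Ryz; apply/asboolP; exact: Rtrans Ryz.
have Rb_chain : forall A : classical_sets.set U, classical_sets.total_on A Rb ->
    exists u, forall x, A x -> Rb x u.
  move=> A totA; have [[c Ac]|noA] := pselect (exists c, A c); last first.
    by exists (exist _ t0 Pt0) => x Ax; case: noA; exists x.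
  pose C := fun t => exists2 x : U, A x & sval x = t.
  have CP : forall t, C t -> P t by move=> _ [x _ <-]; exact: proj2_sig.
  have Ctot : forall s t, C s -> C t -> R s t \/ R t s.
    by move=> _ _ [x Ax <-] [y Ay <-]; case: (totA x y Ax Ay) => /asboolP; auto.
  have [u Pu ub] := chain_ub C CP Ctot (sval c) (ex_intro2 _ _ c Ac erefl).
  by exists (exist _ u Pu) => x Ax; apply/asboolP; apply: ub; exists x.
have [[m Pm] mmax] :=
  classical_sets.ZL_preorder (exist _ t0 Pt0) Rb_refl Rb_trans Rb_chain.
exists m => // t Pt Rmt.
by have /asboolP := mmax (exist _ t Pt) (introT (asboolP _) Rmt).
Qed.

Section Congruences.
Variables (s : signature) (M : algebra s).

Lemma eval_ext (X : Type) (e1 e2 : X -> M) (t : term s X) :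
  (forall v, e1 v = e2 v) -> eval e1 t = eval e2 t.
Proof.
move=> E; elim: t => [x|f args IH] /=; first exact: E.
by congr (@ops _ _ _ _); apply: funext => i; apply: IH.
Qed.

Lemma eval_cong (X : Type) (th : prel M) (e1 e2 : X -> M) (t : term s X) :
  is_cong th -> (forall v, th (e1 v) (e2 v)) -> th (eval e1 t) (eval e2 t).
Proof.
case=> _ _ _ th_ops E; elim: t => [x|f args IH] /=; first exact: E.
exact: th_ops.
Qed.

Lemma Delta_cong : is_cong (@Delta M).
Proof.
rewrite /Delta; split => //.
- by move=> x y z -> ->.
- by move=> f a b E; congr (@ops _ _ _ _); apply: funext.
Qed.

(* [alpha, beta] ⊆ alpha: alpha itself satisfies C(alpha, beta; alpha). *)
Lemma commutator_le_left (al be : prel M) :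
  is_cong al -> rsub (commutator al be) al.
Proof.
move=> al_cong x y; apply; first exact: al_cong.
move=> n k t a b c d al_ab _.
have E : forall c', al (eval (env2 a c') t) (eval (env2 b c') t).
  by move=> c'; apply: eval_cong => // -[i|j] /=; [exact: al_ab | case: al_cong].
case: al_cong => _ al_sym al_trans _; split => h.
- exact: al_trans (al_sym _ _ (E c)) (al_trans _ _ _ h (E d)).
- exact: al_trans (E c) (al_trans _ _ _ h (al_sym _ _ (E d))).
Qed.

Lemma cjoin_cong (I : Type) (fam : I -> prel M) : is_cong (cjoin fam).
Proof.
split.
- by move=> x th [th_refl _ _ _] _; exact: th_refl.
- move=> x y h th th_cong ub; case: (th_cong) => _ th_sym _ _.
  exact/th_sym/(h _ th_cong ub).
- move=> x y z hxy hyz th th_cong ub; case: (th_cong) => _ _ th_trans _.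
  exact: th_trans (hxy _ _ _) (hyz _ _ _).
- move=> f a b h th th_cong ub; case: (th_cong) => _ _ _ th_ops.
  by apply: th_ops => i; exact: h.
Qed.

Lemma cjoin_ub (I : Type) (fam : I -> prel M) i : rsub (fam i) (cjoin fam).
Proof. by move=> x y h th _ ub; exact: ub h. Qed.

Lemma cjoin_lub (I : Type) (fam : I -> prel M) (th : prel M) :
  is_cong th -> (forall i, rsub (fam i) th) -> rsub (cjoin fam) th.
Proof. by move=> th_cong ub x y; apply. Qed.

Definition cjoin2 (th al : prel M) : prel M :=
  cjoin (fun b : bool => if b then th else al).

Lemma cjoin2_fam_cong (th al : prel M) :
  is_cong th -> is_cong al -> forall b : bool, is_cong (if b then th else al).
Proof. by move=> ? ? []. Qed.

Lemma cjoin2_cong (th al : prel M) : is_cong (cjoin2 th al).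
Proof. exact: cjoin_cong. Qed.

Lemma cjoin2_ubl (th al : prel M) : rsub th (cjoin2 th al).
Proof. exact: (@cjoin_ub _ (fun b : bool => if b then th else al) true). Qed.

Lemma cjoin2_ubr (th al : prel M) : rsub al (cjoin2 th al).
Proof. exact: (@cjoin_ub _ (fun b : bool => if b then th else al) false). Qed.

Lemma commutator_cjoin2_le (th al be : prel M) :
  comm_commutative M -> comm_join_distributive M ->
  is_cong th -> is_cong al -> is_cong be ->
  rsub (commutator al be) th ->
  rsub (commutator (cjoin2 th al) (cjoin2 th be)) th.
Proof.
move=> Mcomm Mdist th_cong al_cong be_cong al_be x y.
have thbe_cong := cjoin2_cong th be.
move/(Mdist _ _ _ (cjoin2_fam_cong th_cong al_cong) thbe_cong).
apply: cjoin_lub => // -[] u v /=; first exact: commutator_le_left.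
move/(Mcomm _ _ al_cong thbe_cong).
move/(Mdist _ _ _ (cjoin2_fam_cong th_cong be_cong) al_cong).
apply: cjoin_lub => // -[] p q /=; first exact: commutator_le_left.
by move/(Mcomm _ _ be_cong al_cong); exact: al_be.
Qed.

Definition rchain (C : prel M -> Prop) : Prop :=
  forall r q, C r -> C q -> rsub r q \/ rsub q r.

Definition runion (C : prel M -> Prop) : prel M :=
  fun x y => exists2 r, C r & r x y.

Definition rinter (C : prel M -> Prop) : prel M :=
  fun x y => forall r, C r -> r x y.

Lemma runion_fin (C : prel M -> Prop) (r0 : prel M) (n : nat)
  (a b : 'I_n -> M) :
  C r0 -> rchain C -> (forall i, runion C (a i) (b i)) ->
  exists2 r, C r & forall i, r (a i) (b i).
Proof.
move=> Cr0 Cchain ab.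
suff /(_ n) [r Cr rab] :
    forall m, exists2 r, C r & forall i : 'I_n, i < m -> r (a i) (b i).
  by exists r => // i; exact: rab (ltn_ord i).
elim=> [|m [r Cr rab]]; first by exists r0.
have [lt_mn|le_nm] := ltnP m n; last first.
  by exists r => // i _; apply: rab (leq_trans (ltn_ord i) le_nm).
have [q Cq qab] := ab (Ordinal lt_mn).
have [p [Cp rp qp]] : exists p, [/\ C p, rsub r p & rsub q p].
  by case: (Cchain r q Cr Cq) => [rq|qr]; [exists q | exists r]; split => // x y.
exists p => // i; rewrite ltnS leq_eqVlt => /orP[/eqP im|/rab/rp//].
have -> : i = Ordinal lt_mn by exact: val_inj.
exact: qp.
Qed.

Lemma runion_cong (C : prel M -> Prop) (r0 : prel M) :
  C r0 -> rchain C -> (forall r, C r -> is_cong r) -> is_cong (runion C).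
Proof.
move=> Cr0 Cchain Ccong; split.
- by move=> x; exists r0 => //; case: (Ccong r0 Cr0).
- by move=> x y [r Cr rxy]; exists r => //; case: (Ccong r Cr) => _ + _ _; apply.
- move=> x y z [r Cr rxy] [q Cq qyz]; case: (Cchain r q Cr Cq) => [rq|qr].
  + exists q => //; case: (Ccong q Cq) => _ _ q_trans _.
    exact: q_trans (rq _ _ rxy) qyz.
  + exists r => //; case: (Ccong r Cr) => _ _ r_trans _.
    exact: r_trans rxy (qr _ _ qyz).
- move=> f a b ab; have [r Cr rab] := runion_fin Cr0 Cchain ab.
  by exists r => //; case: (Ccong r Cr) => _ _ _; apply.
Qed.

Lemma rinter_cong (C : prel M -> Prop) :
  (forall r, C r -> is_cong r) -> is_cong (rinter C).
Proof.
move=> Ccong; split=> [x|x y h|x y z hxy hyz|f a b h] r Cr;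
  case: (Ccong r Cr) => r_refl r_sym r_trans r_ops.
- exact: r_refl.
- exact: r_sym (h r Cr).
- exact: r_trans (hxy r Cr) (hyz r Cr).
- by apply: r_ops => i; exact: h.
Qed.

Lemma prime_left (ph al be : prel M) :
  is_prime ph -> is_cong al -> is_cong be ->
  rsub (commutator al be) ph -> ~ rsub be ph -> rsub al ph.
Proof.
move=> [_ _ ph_prime] al_cong be_cong /(ph_prime _ _ al_cong be_cong).
by case=> // be_ph /(_ be_ph).
Qed.

Lemma rinter_prime (C : prel M -> Prop) (r0 : prel M) :
  C r0 -> rchain C -> (forall r, C r -> is_prime r) -> is_prime (rinter C).
Proof.
move=> Cr0 Cchain Cprime.
split; first by apply: rinter_cong => r /Cprime[].
- move=> nabla; case: (Cprime r0 Cr0) => _ + _; apply => x y.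
  by split=> // _; apply: (proj2 (nabla x y)).
- move=> al be al_cong be_cong al_be.
  have [be_le|] := pselect (rsub be (rinter C)); first by right.
  move=> /existsNP[x /existsNP[y /not_implyP[bexy /existsNP[q /not_implyP[Cq nqxy]]]]].
  have be_q : ~ rsub be q by move=> be_q; exact/nqxy/be_q.
  have al_q : rsub al q.
    by apply: (prime_left (Cprime q Cq) al_cong be_cong) => // u v /al_be; apply.
  left => u v alu r Cr; case: (Cchain r q Cr Cq) => [rq|qr]; last exact/qr/al_q.
  apply: (prime_left (Cprime r Cr)) al_cong be_cong _ _ u v alu.
  - by move=> p w /al_be; apply.
  - by move=> be_r; apply: be_q => p w /be_r /rq.
Qed.

Lemma min_prime_below (ph : prel M) :
  is_prime ph -> exists2 mu, is_min_prime mu & rsub mu ph.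
Proof.
move=> ph_prime.
pose P := fun r => is_prime r /\ rsub r ph.
have [|||mu [mu_prime mu_ph] mu_min] :=
    @zorn_on _ (fun r q => rsub q r) P ph _ _ (conj ph_prime (fun _ _ h => h)).
- by move=> r x y.
- by move=> r q p qr pq x y /pq /qr.
- move=> C CP Cchain r0 Cr0; exists (rinter C); last by move=> r Cr x y; apply.
  split; last by move=> x y /(_ r0 Cr0) /(proj2 (CP r0 Cr0)).
  apply: (rinter_prime Cr0) => [r q Cr Cq|r /CP[]//].
  by case: (Cchain q r Cq Cr); auto.
- exists mu => //; split => // q q_prime q_mu.
  by apply: mu_min => //; split => // x y /q_mu /mu_ph.
Qed.

End Congruences.

Section Restriction.
Variables (s : signature) (B : algebra s) (S : B -> Prop) (HS : is_subuniverse S).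

Lemma eval_subalg (X : Type) (env : X -> subalg HS) (t : term s X) :
  proj1_sig (eval env t) = @eval s B X (fun v => proj1_sig (env v)) t.
Proof.
elim: t => [x|f args IH] //=.
by congr (@ops _ _ _ _); apply: funext => i; apply: IH.
Qed.

Lemma restr_cong (th : prel B) : is_cong th -> is_cong (restr HS th).
Proof.
case=> th_refl th_sym th_trans th_ops; split; rewrite /restr.
- by move=> x; exact: th_refl.
- by move=> x y; exact: th_sym.
- by move=> x y z; exact: th_trans.
- by move=> f a b ab; exact: th_ops.
Qed.

(* The commutator in A of the restrictions lies below the restriction of the
   commutator in B: each term condition of B restricts to one of A. *)
Lemma commutator_restr (al be : prel B) :
  rsub (commutator (restr HS al) (restr HS be)) (restr HS (commutator al be)).
Proof.
move=> x y h mu mu_cong mu_TC; apply: h (restr_cong mu_cong) _.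
move=> n k t a b c d ab cd.
have E : forall (a' : 'I_n -> subalg HS) (c' : 'I_k -> subalg HS),
    proj1_sig (eval (env2 a' c') t) =
    eval (env2 (fun i => proj1_sig (a' i)) (fun j => proj1_sig (c' j))) t.
  by move=> a' c'; rewrite eval_subalg; apply: eval_ext => -[].
by rewrite /restr !E; exact: mu_TC.
Qed.

Lemma restr_Delta (psi : prel (subalg HS)) :
  is_cong psi -> rsub (restr HS (@Delta B)) psi.
Proof.
move=> [psi_refl _ _ _] [x hx] [y hy]; rewrite /restr /Delta /= => E.
by subst y; rewrite (Prop_irrelevance hx hy).
Qed.

Variable psi : prel (subalg HS).
Hypotheses (Bcomm : comm_commutative B) (Bdist : comm_join_distributive B)
  (psi_prime : is_prime psi).

Lemma maximal_avoiding_prime (th : prel B) :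
  is_cong th -> rsub (restr HS th) psi ->
  (forall g, is_cong g -> rsub th g -> rsub (restr HS g) psi -> rsub g th) ->
  is_prime th.
Proof.
move=> th_cong th_psi th_max; case: psi_prime => _ psi_proper psi_split.
split => // [th_nabla|al be al_cong be_cong al_be].
  apply: psi_proper => x y; split=> // _.
  by apply: th_psi; apply: (proj2 (th_nabla _ _)).
have shrink : forall ga, rsub (restr HS (cjoin2 th ga)) psi -> rsub ga th.
  move=> ga ga_psi x y /(@cjoin2_ubr _ _ th ga).
  exact: th_max (cjoin2_cong th ga) (@cjoin2_ubl _ _ th ga) ga_psi x y.
have [] := psi_split _ _ (restr_cong (cjoin2_cong th al))
                         (restr_cong (cjoin2_cong th be)).
- move=> x y /commutator_restr; rewrite /restr => h; apply: th_psi.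
  exact: commutator_cjoin2_le al_be _ _ h.
- by left; exact: shrink.
- by right; exact: shrink.
Qed.

Lemma prime_avoiding : exists2 th, is_prime th & rsub (restr HS th) psi.
Proof.
pose P := fun th : prel B => is_cong th /\ rsub (restr HS th) psi.
have P_Delta : P (@Delta B).
  by split; [exact: Delta_cong | case: psi_prime => psi_cong _ _; exact: restr_Delta].
have [|||th [th_cong th_psi] th_max] := @zorn_on _ (@rsub B) P _ _ _ P_Delta.
- by move=> r x y.
- by move=> r q p rq qp x y /rq /qp.
- move=> C CP Cchain r0 Cr0; exists (runion C); last by move=> r Cr x y; exists r.
  split; first by apply: (runion_cong Cr0 Cchain) => r /CP[].
  by move=> x y [r /CP[_ r_psi]]; exact: r_psi.
- exists th => //; apply: maximal_avoiding_prime => // g g_cong th_g g_psi.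
  exact: th_max.
Qed.

End Restriction.

Theorem mainTheorem13 (s : signature) (B : algebra s) (S : B -> Prop)
  (HS : is_subuniverse S) :
  semiprime (subalg HS) -> semiprime B ->
  comm_commutative (subalg HS) -> comm_join_distributive (subalg HS) ->
  comm_commutative B -> comm_join_distributive B ->
  admissible HS ->
  forall psi : prel (subalg HS), is_prime psi ->
    exists mu : prel B, is_min_prime mu /\ rsub (restr HS mu) psi.
Proof.
move=> _ _ _ _ Bcomm Bdist _ psi psi_prime.
have [th th_prime th_psi] := prime_avoiding Bcomm Bdist psi_prime.
have [mu mu_min mu_th] := min_prime_below th_prime.
by exists mu; split=> // x y /mu_th /th_psi.
Qed.
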